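(* Every non-identity element of $X$ has infinitely many conjugates in $X$. Consequently, for every field $F$, the centre of the group algebra $FX$ (finite $F$-linear combinations of elements of $X$) is one-dimensional, equal to $F\cdot 1$.
   Context: Let $p$ and $q$ be distinct odd primes. Let $m$ be the smallest positive integer such that $p$ divides $|\mathrm{Sp}(2m,q)|$, and $n$ the smallest positive integer such that $q$ divides $|\mathrm{Sp}(2n,p)|$. Let $Q$ be an extraspecial $q$-group of order $q^{2m+1}$ and exponent $q$, and let $A = Q\rtimes\langle \alpha\rangle$ where $\alpha$ has order $p$, acts trivially on $Z(Q)$ and faithfully on $Q/Z(Q)$. Let $P$ be an extraspecial $p$-group of order $p^{2n+1}$ and exponent $p$, and let $B = P\rtimes\langle\beta\rangle$ where $\beta$ has order $q$, acts trivially on $Z(P)$ and faithfully on $P/Z(P)$. Then $C_A = Z(Q)\times\langle\alpha\rangle$ is a cyclic self-normalizing (nilpotent) subgroup of $A$ of order $pq$, and $C_B = Z(P)\times\langle \beta\rangle$ is a cyclic self-normalizing subgroup of $B$ of order $pq$. Let $X = A *_C B$ be the free product of $A$ and $B$ amalgamated along an isomorphism $C_A\to C_B$ (which necessarily maps $\langle\alpha\rangle$ onto $Z(P)$ and $Z(Q)$ onto $\langle\beta\rangle$); regard $A$, $B$ as subgroups of $X$ with $A\cap B = C = Z(P)\times Z(Q)$. *)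

From HB Require Import structures.
From mathcomp Require Import all_boot all_order all_algebra all_fingroup all_solvable.
Set Implicit Arguments. Unset Strict Implicit. Unset Printing Implicit Defensive.
Import GRing.Theory.

Definition is_group (T : Type) (mul : T -> T -> T) (one : T) (inv : T -> T) : Prop :=
  [/\ forall x y z, mul x (mul y z) = mul (mul x y) z,
      forall x, mul one x = x,
      forall x, mul x one = x,
      forall x, mul (inv x) x = one &
      forall x, mul x (inv x) = one].

Definition fin_hom (gT : finGroupType) (A : {set gT}) (T : Type)
  (mul : T -> T -> T) (f : gT -> T) : Prop :=
  {in A &, forall x y, f (x * y)%g = mul (f x) (f y)}.

Definition abs_hom (T U : Type) (mulT : T -> T -> T) (mulU : U -> U -> U)
  (h : T -> U) : Prop := forall x y, h (mulT x y) = mulU (h x) (h y).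

Definition is_amalgamated_product (gT hT : finGroupType)
  (A CA : {set gT}) (B : {set hT}) (phi : gT -> hT)
  (X : Type) (mul : X -> X -> X) (one : X) (inv : X -> X)
  (iA : gT -> X) (iB : hT -> X) : Prop :=
  [/\ is_group mul one inv,
      fin_hom A mul iA,
      fin_hom B mul iB,
      {in CA, forall c, iA c = iB (phi c)} &
      forall (G : Type) (gm : G -> G -> G) (g1 : G) (gi : G -> G),
        is_group gm g1 gi ->
        forall (fA : gT -> G) (fB : hT -> G),
          fin_hom A gm fA -> fin_hom B gm fB ->
          {in CA, forall c, fA c = fB (phi c)} ->
          (exists h : X -> G, [/\ abs_hom mul gm h,
                                 {in A, forall a, h (iA a) = fA a} &
                                 {in B, forall b, h (iB b) = fB b}]) /\
          (forall h1 h2 : X -> G,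
              abs_hom mul gm h1 -> {in A, forall a, h1 (iA a) = fA a} ->
              {in B, forall b, h1 (iB b) = fB b} ->
              abs_hom mul gm h2 -> {in A, forall a, h2 (iA a) = fA a} ->
              {in B, forall b, h2 (iB b) = fB b} ->
              forall x, h1 x = h2 x)].

Definition infinite_conj_class (X : eqType) (mul : X -> X -> X) (inv : X -> X)
  (x : X) : Prop :=
  ~ exists s : seq X, forall g : X, mul (inv g) (mul x g) \in s.

(* An element of FX is represented by a formal finite sum \sum_i c_i x_i,
   given as a list of pairs (c_i, x_i); two representatives denote the same
   element of FX iff they have the same coefficient function. *)
Definition ga_coef (F : fieldType) (X : eqType) (s : seq (F * X)) (x : X) : F :=
  \sum_(u <- s) (if u.2 == x then u.1 else 0).

Definition ga_mul (F : fieldType) (X : eqType) (mul : X -> X -> X)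
  (s t : seq (F * X)) : seq (F * X) :=
  [seq ((u.1 * v.1)%R, mul u.2 v.2) | u <- s, v <- t].

Definition ga_central (F : fieldType) (X : eqType) (mul : X -> X -> X)
  (z : seq (F * X)) : Prop :=
  forall t : seq (F * X), ga_coef (ga_mul mul z t) =1 ga_coef (ga_mul mul t z).

Local Open Scope ring_scope.
Definition sympJ (n q : nat) : 'M['F_q]_(n + n) :=
  block_mx 0 1%:M (- 1%:M) 0.

Definition Sp (n q : nat) : {set 'M['F_q]_(n + n)} :=
  [set M : 'M['F_q]_(n + n) | M^T *m sympJ n q *m M == sympJ n q].

Definition least_Sp_index (p q m : nat) : Prop :=
  [/\ (0 < m)%N, (p %| #|Sp m q|)%N &
      forall k, (0 < k < m)%N -> ~~ (p %| #|Sp k q|)%N].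

(* x acts (by conjugation) faithfully on Q/Z(Q): no nontrivial element of
   <[x]> centralises Q modulo Z(Q) *)
Definition faithful_on_frattini_quot (gT : finGroupType) (Q : {group gT}) (x : gT) : Prop :=
  (forall a, a \in <[x]> -> [~: Q, <[a]>] \subset 'Z(Q) -> a = 1)%g.

From HB Require Import structures.
From mathcomp Require Import all_boot all_order all_algebra all_fingroup all_solvable.
From Stdlib Require Import FunctionalExtensionality ProofIrrelevance.
Set Implicit Arguments. Unset Strict Implicit. Unset Printing Implicit Defensive.

(* Let C be the amalgamated subgroup.  Since |A| > 2|C| and
   |B| > 2|C|, neither factor is covered by C together with one coset of C.
   The normal-form theorem for X = A *_C B (a consequence of the universal
   property, by letting X act on normal forms) shows that the length of a
   reduced word is an invariant of the element it represents.  Every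
   non-identity x is conjugate to a cyclically reduced word of positive
   length: a non-identity c of C is moved out of C by conjugation in A or in
   B, since otherwise c would be central in Q and phi c central in P, whose
   orders are coprime.  Conjugating a cyclically reduced word by a syllable of
   the opposite side lengthens it by one while keeping it cyclically reduced,
   so the conjugacy class of x contains elements of every length, and is
   infinite.  An element of FX commuting with every group element has a
   coefficient function constant on conjugacy classes, hence supported on
   the finite classes, i.e. on 1. *)

Section AbstractGroup.
Variables (X : Type) (mul : X -> X -> X) (one : X) (inv : X -> X).
Hypothesis gX : is_group mul one inv.

Lemma amulA x y z : mul x (mul y z) = mul (mul x y) z. Proof. by case: gX. Qed.
Lemma amul1g x : mul one x = x. Proof. by case: gX. Qed.
Lemma amulg1 x : mul x one = x. Proof. by case: gX. Qed.
Lemma amulVg x : mul (inv x) x = one. Proof. by case: gX. Qed.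
Lemma amulgV x : mul x (inv x) = one. Proof. by case: gX. Qed.

Lemma amulgI x y z : mul x y = mul x z -> y = z.
Proof. by move=> e; rewrite -(amul1g y) -(amul1g z) -(amulVg x) -!amulA e. Qed.

Lemma amulKg x y : mul (inv x) (mul x y) = y.
Proof. by rewrite amulA amulVg amul1g. Qed.

Lemma amulKVg x y : mul x (mul (inv x) y) = y.
Proof. by rewrite amulA amulgV amul1g. Qed.

Lemma amulgK x y : mul (mul y x) (inv x) = y.
Proof. by rewrite -amulA amulgV amulg1. Qed.

Lemma amulgKV x y : mul (mul y (inv x)) x = y.
Proof. by rewrite -amulA amulVg amulg1. Qed.

Lemma ainv_uniq x y : mul x y = one -> inv x = y.
Proof. by move=> e; apply: (@amulgI x); rewrite amulgV e. Qed.

Lemma ainvK x : inv (inv x) = x.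
Proof. exact/ainv_uniq/amulVg. Qed.

Lemma ainvM x y : inv (mul x y) = mul (inv y) (inv x).
Proof. by apply: ainv_uniq; rewrite -amulA (amulA y) amulgV amul1g amulgV. Qed.

Lemma ainv1 : inv one = one.
Proof. exact/ainv_uniq/amul1g. Qed.

End AbstractGroup.

Lemma abs_hom1 (T U : Type) (mT : T -> T -> T) (oT : T) (iT : T -> T)
    (mU : U -> U -> U) (oU : U) (iU : U -> U) (h : T -> U) :
  is_group mT oT iT -> is_group mU oU iU -> abs_hom mT mU h -> h oT = oU.
Proof.
move=> gT gU hM; apply: (amulgI gU (x := h oT)).
by rewrite -hM (amul1g gT) (amulg1 gU).
Qed.

Section FinHom.
Variables (gT : finGroupType) (G : {group gT}) (X : Type).
Variables (mul : X -> X -> X) (one : X) (inv : X -> X) (f : gT -> X).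
Hypotheses (gX : is_group mul one inv) (fM : fin_hom G mul f).

Lemma fin_hom1 : f 1%g = one.
Proof. by apply: (amulgI gX (x := f 1%g)); rewrite -fM // mulg1 (amulg1 gX). Qed.

Lemma fin_homV x : x \in G -> f x^-1%g = inv (f x).
Proof.
by move=> Gx; apply/esym/(ainv_uniq gX); rewrite -fM ?groupV // mulgV fin_hom1.
Qed.

End FinHom.

Section Bijections.
Variable T : Type.

Record bij := Bij { bij_fun : T -> T; bij_inv : T -> T;
                    bij_funK : cancel bij_fun bij_inv;
                    bij_invK : cancel bij_inv bij_fun }.

Lemma bij_eq (f g : bij) : bij_fun f =1 bij_fun g -> f = g.
Proof.
case: f g => f f' fK f'K [g g' gK g'K] /= /functional_extensionality efg.
subst g; have ef' : f' = g'.
  by apply: functional_extensionality => x; apply: (can_inj fK); rewrite f'K g'K.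
subst g'; congr Bij; exact: proof_irrelevance.
Qed.

Definition bij_mul (f g : bij) : bij :=
  Bij (can_comp (bij_funK f) (bij_funK g)) (can_comp (bij_invK g) (bij_invK f)).
Definition bij_one : bij := @Bij id id (fun _ => erefl) (fun _ => erefl).
Definition bij_inverse (f : bij) : bij := Bij (bij_invK f) (bij_funK f).

Lemma bij_is_group : is_group bij_mul bij_one bij_inverse.
Proof. by split=> *; apply: bij_eq => x //=; [exact: bij_funK | exact: bij_invK]. Qed.

End Bijections.

Section GroupAlgebraCentre.
Variables (X : eqType) (mul : X -> X -> X) (one : X) (inv : X -> X).
Hypothesis gX : is_group mul one inv.
Import GRing.Theory.
Local Open Scope ring_scope.

Lemma ga_coef_mul (F : fieldType) (s t : seq (F * X)) x :
  ga_coef (ga_mul mul s t) x =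
  \sum_(u <- s) \sum_(v <- t) (if mul u.2 v.2 == x then u.1 * v.1 else 0).
Proof. by rewrite /ga_coef /ga_mul big_allpairs_dep. Qed.

Lemma ga_coef_mulr (F : fieldType) (s t : seq (F * X)) x :
  ga_coef (ga_mul mul s t) x = \sum_(v <- t) ga_coef s (mul x (inv v.2)) * v.1.
Proof.
rewrite ga_coef_mul exchange_big /=; apply: eq_bigr => v _.
rewrite /ga_coef mulr_suml; apply: eq_bigr => u _.
have -> : (mul u.2 v.2 == x) = (u.2 == mul x (inv v.2)).
  by apply/eqP/eqP => [<- | ->]; rewrite ?(amulgK gX) ?(amulgKV gX).
by case: ifP; rewrite ?mul0r.
Qed.

Lemma ga_coef_mull (F : fieldType) (s t : seq (F * X)) x :
  ga_coef (ga_mul mul t s) x = \sum_(v <- t) v.1 * ga_coef s (mul (inv v.2) x).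
Proof.
rewrite ga_coef_mul; apply: eq_bigr => v _.
rewrite /ga_coef mulr_sumr; apply: eq_bigr => u _.
have -> : (mul v.2 u.2 == x) = (u.2 == mul (inv v.2) x).
  by apply/eqP/eqP => [<- | ->]; rewrite ?(amulKg gX) ?(amulKVg gX).
by case: ifP; rewrite ?mulr0.
Qed.

Lemma ga_coef_support (F : fieldType) (s : seq (F * X)) x :
  ga_coef s x != 0 -> x \in map snd s.
Proof.
apply: contraR => sx; rewrite /ga_coef big1_seq // => u /andP[_ su].
by case: eqP => // ux; case/negP: sx; rewrite -ux map_f.
Qed.

Lemma ga_coef1 (F : fieldType) (c : F) x :
  ga_coef [:: (c, one)] x = if one == x then c else 0.
Proof. by rewrite /ga_coef big_seq1. Qed.

Lemma ga_coef_conj (F : fieldType) (z : seq (F * X)) g y :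
  ga_central mul z -> ga_coef z (mul g (mul y (inv g))) = ga_coef z y.
Proof.
move=> /(_ [:: (1, g)] (mul g y)).
rewrite ga_coef_mulr ga_coef_mull !big_seq1 /= mulr1 mul1r => e.
by rewrite (amulA gX) e (amulKg gX).
Qed.

Lemma ga_central_scalar (F : fieldType) (z : seq (F * X)) :
  (forall x, x <> one -> infinite_conj_class mul inv x) ->
  ga_central mul z <-> exists c : F, ga_coef z =1 ga_coef [:: (c, one)].
Proof.
move=> icc; split=> [cz | [c cz] t x].
  exists (ga_coef z one) => y; rewrite ga_coef1.
  case: eqP => [<- // | /nesym y1]; apply/eqP; apply: contraT => zy.
  case: (icc y y1); exists (map snd z) => g; apply: ga_coef_support.
  by have := ga_coef_conj (inv g) y cz; rewrite (ainvK gX) => ->.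
rewrite ga_coef_mulr ga_coef_mull; apply: eq_bigr => v _.
rewrite !cz !ga_coef1 mulrC.
suff -> : (one == mul x (inv v.2)) = (one == mul (inv v.2) x) by [].
apply/eqP/eqP => e.
  by rewrite -(amulgKV gX v.2 x) -e (amul1g gX) (amulVg gX).
by rewrite -(amulKVg gX v.2 x) -e (amulg1 gX) (amulgV gX).
Qed.

End GroupAlgebraCentre.

Section CosetRepresentatives.
Variables (gT : finGroupType) (C : {group gT}).
Local Open Scope group_scope.

Definition crep (e : gT) := repr (C :* e).

Lemma crepP e : exists2 c, c \in C & crep e = c * e.
Proof. by have /rcosetP[c Cc] := mem_repr_rcoset C e; exists c. Qed.

Lemma mul_crepV e : e * (crep e)^-1 \in C.
Proof. by have [c Cc ->] := crepP e; rewrite invMg mulgA mulgV mul1g groupV. Qed.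

Lemma crep_id e : crep (crep e) = crep e.
Proof. by rewrite /crep rcoset_repr. Qed.

Lemma crepMl c e : c \in C -> crep (c * e) = crep e.
Proof. by move=> Cc; rewrite /crep rcosetM (rcoset_id Cc). Qed.

Lemma crep_in c : c \in C -> crep c = 1.
Proof. by move=> Cc; rewrite /crep rcoset_id // repr_group. Qed.

Lemma crep_eq1 e : crep e = 1 -> e \in C.
Proof.
by have [c Cc ->] := crepP e => /eqP; rewrite -eq_invg_mul => /eqP <-; rewrite groupV.
Qed.

Lemma crep_group (G : {group gT}) e : C \subset G -> e \in G -> crep e \in G.
Proof. by move=> sCG Ge; have [c Cc ->] := crepP e; rewrite groupM // (subsetP sCG). Qed.

End CosetRepresentatives.

Section NormalForms.
Variables (gT hT : finGroupType) (A CA : {group gT}) (B CB : {group hT}).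
Variable phi : {morphism CA >-> hT}.
Hypotheses (isoC : isom CA CB phi) (sCA : CA \subset A) (sCB : CB \subset B).
Local Open Scope group_scope.

Lemma phi_inj : 'injm phi. Proof. by case/isomP: isoC. Qed.
Lemma phi_im : phi @* CA = CB. Proof. by case/isomP: isoC. Qed.
Definition phiV := invm phi_inj.

Lemma phi_in c : c \in CA -> phi c \in CB.
Proof. by move=> Cc; rewrite -phi_im mem_morphim. Qed.
Lemma phiVK c : c \in CA -> phiV (phi c) = c.
Proof. exact: invmE. Qed.
Lemma phiKV d : d \in CB -> phi (phiV d) = d.
Proof. by rewrite -phi_im; exact: invmK. Qed.
Lemma phiV_in d : d \in CB -> phiV d \in CA.
Proof. by rewrite -phi_im => /morphimP[c _ Cc ->]; rewrite phiVK. Qed.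

Definition rA := crep CA.
Definition rB := crep CB.

Definition letter := (gT + hT)%type.
Definition side (x : letter) : bool := if x is inl _ then true else false.
Definition alt_side (x y : letter) := side x != side y.
Definition alternating (P : pred letter) (l : seq letter) :=
  all P l && (if l is x :: l' then path alt_side x l' else true).

Lemma alternating_cons P x l : alternating P (x :: l) =
  [&& P x, alternating P l & (if l is y :: _ then side x != side y else true)].
Proof.
case: l => [|y l]; rewrite /alternating /alt_side /= ?andbT //.
by rewrite -!andbA; do 3!congr andb; exact: andbC.
Qed.

Definition transversal_letter (x : letter) : bool :=
  match x with
  | inl t => [&& t \in A, rA t == t & t != 1]
  | inr t => [&& t \in B, rB t == t & t != 1]
  end.

(* A normal form (c, [t1; ...; tk]) stands for c t1 ... tk, with c in CA and
   the ti alternating nontrivial coset representatives. *)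
Definition normal_form (w : gT * seq letter) :=
  (w.1 \in CA) && alternating transversal_letter w.2.
Definition headA (l : seq letter) := if l is inl _ :: _ then true else false.
Definition headB (l : seq letter) := if l is inr _ :: _ then true else false.

Definition splitA (w : gT * seq letter) : gT * seq letter :=
  match w with (c, inl t :: l) => (c * t, l) | _ => w end.
Definition joinA (e : gT) (l : seq letter) : gT * seq letter :=
  (e * (rA e)^-1, if rA e == 1 then l else inl (rA e) :: l).
(* [actA a] absorbs the leading A-letter into the CA-part, multiplies by a,
   and splits off the coset representative again (van der Waerden's trick). *)
Definition actA a w := joinA (a * (splitA w).1) (splitA w).2.

Definition splitB (w : gT * seq letter) : hT * seq letter :=
  match w with (c, inr t :: l) => (phi c * t, l) | (c, l) => (phi c, l) end.
Definition joinB (e : hT) (l : seq letter) : gT * seq letter :=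
  (phiV (e * (rB e)^-1), if rB e == 1 then l else inr (rB e) :: l).
Definition actB b w := joinB (b * (splitB w).1) (splitB w).2.

Lemma splitA_normal w : normal_form w ->
  [/\ (splitA w).1 \in A, alternating transversal_letter (splitA w).2 & ~~ headA (splitA w).2].
Proof.
case: w => c [|[t|t] l] /andP[/= Cc] al; have Ac := subsetP sCA _ Cc => //.
move: al; rewrite alternating_cons /= => /and3P[/and3P[At _ _] al hd].
split=> //; first by rewrite groupM.
by case: l hd {al} => [|[y|y] l].
Qed.

Lemma splitB_normal w : normal_form w ->
  [/\ (splitB w).1 \in B, alternating transversal_letter (splitB w).2 & ~~ headB (splitB w).2].
Proof.
case: w => c [|[t|t] l] /andP[/= Cc] al; have Bc := subsetP sCB _ (phi_in Cc) => //.
move: al; rewrite alternating_cons /= => /and3P[/and3P[Bt _ _] al hd].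
split=> //; first by rewrite groupM.
by case: l hd {al} => [|[y|y] l].
Qed.

Lemma joinA_normal e l : e \in A ->
  alternating transversal_letter l -> ~~ headA l -> normal_form (joinA e l).
Proof.
move=> Ae al nl; rewrite /normal_form /joinA /= mul_crepV /=.
case: eqP => // r1; rewrite alternating_cons al /= crep_group // /rA crep_id eqxx /=.
by apply/andP; split; [apply/eqP | case: l nl {al} => [|[y|y] l]].
Qed.

Lemma joinB_normal e l : e \in B ->
  alternating transversal_letter l -> ~~ headB l -> normal_form (joinB e l).
Proof.
move=> Be al nl; rewrite /normal_form /joinB /= phiV_in ?mul_crepV //=.
case: eqP => // r1; rewrite alternating_cons al /= crep_group // /rB crep_id eqxx /=.
by apply/andP; split; [apply/eqP | case: l nl {al} => [|[y|y] l]].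
Qed.

Lemma splitA_joinA e l : ~~ headA l -> splitA (joinA e l) = (e, l).
Proof.
rewrite /joinA; case: eqP => [-> | _] nl /=; last by rewrite mulgKV.
by rewrite invg1 mulg1; case: l nl => [|[y|y] l].
Qed.

Lemma splitB_joinB e l : e \in B -> ~~ headB l -> splitB (joinB e l) = (e, l).
Proof.
move=> Be; have Ce := mul_crepV CB e.
rewrite /joinB; case: eqP => [r1 | _] nl /=; rewrite phiKV //.
  by rewrite r1 invg1 mulg1; case: l nl => [|[y|y] l].
by rewrite mulgKV.
Qed.

Lemma joinA_splitA w : normal_form w -> joinA (splitA w).1 (splitA w).2 = w.
Proof.
case: w => c [|[t|t] l] /andP[/= Cc]; rewrite /joinA /=.
- by rewrite /rA crep_in // eqxx invg1 mulg1.
- rewrite alternating_cons => /and3P[/and3P[_ /eqP rt nt] _ _].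
  by rewrite /rA crepMl // -/(rA t) rt (negPf nt) mulgK.
- by rewrite /rA crep_in // eqxx invg1 mulg1.
Qed.

Lemma joinB_splitB w : normal_form w -> joinB (splitB w).1 (splitB w).2 = w.
Proof.
case: w => c [|[t|t] l] /andP[/= Cc]; rewrite /joinB /=.
- by rewrite /rB crep_in ?phi_in // eqxx invg1 mulg1 phiVK.
- by rewrite /rB crep_in ?phi_in // eqxx invg1 mulg1 phiVK.
- rewrite alternating_cons => /and3P[/and3P[_ /eqP rt nt] _ _].
  by rewrite /rB crepMl ?phi_in // -/(rB t) rt (negPf nt) mulgK phiVK.
Qed.

Lemma actA_normal a w : a \in A -> normal_form w -> normal_form (actA a w).
Proof. by move=> Aa /splitA_normal[Aw alw hw]; apply: joinA_normal; rewrite ?groupM. Qed.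
Lemma actB_normal b w : b \in B -> normal_form w -> normal_form (actB b w).
Proof. by move=> Bb /splitB_normal[Bw alw hw]; apply: joinB_normal; rewrite ?groupM. Qed.

Lemma actA1 w : normal_form w -> actA 1 w = w.
Proof. by move=> nw; rewrite /actA mul1g joinA_splitA. Qed.
Lemma actB1 w : normal_form w -> actB 1 w = w.
Proof. by move=> nw; rewrite /actB mul1g joinB_splitB. Qed.

Lemma actAM a a' w : normal_form w -> actA (a * a') w = actA a (actA a' w).
Proof. by case/splitA_normal=> _ _ hw; rewrite /actA [splitA (joinA _ _)]splitA_joinA //= mulgA. Qed.
Lemma actBM b b' w : b' \in B -> normal_form w -> actB (b * b') w = actB b (actB b' w).
Proof.
move=> Bb' /splitB_normal[Bw _ hw].
by rewrite /actB [splitB (joinB _ _)]splitB_joinB ?groupM //= mulgA.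
Qed.

Lemma actA_actB c w : c \in CA -> normal_form w -> actA c w = actB (phi c) w.
Proof.
move=> Cc; case: w => c0 [|[t|t] l] /andP[/= Cc0 al]; rewrite /actA /actB /joinA /joinB /=.
- rewrite /rA /rB !crep_in ?groupM ?phi_in // !eqxx !invg1 !mulg1.
  by rewrite -morphM ?phiVK ?groupM.
- move: al; rewrite alternating_cons /= => /and3P[/and3P[_ /eqP rt nt] _ _].
  rewrite /rA mulgA crepMl ?groupM // -/(rA t) rt (negPf nt) mulgK.
  rewrite /rB crep_in ?groupM ?phi_in // eqxx invg1 mulg1.
  by rewrite -morphM ?phiVK ?groupM.
- move: al; rewrite alternating_cons /= => /and3P[/and3P[_ /eqP rt nt] _ _].
  rewrite /rA crep_in ?groupM // eqxx invg1 mulg1.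
  rewrite /rB mulgA crepMl ?groupM ?phi_in // -/(rB t) rt (negPf nt) mulgK.
  by rewrite -morphM ?phiVK ?groupM.
Qed.

Lemma actA_headB a w : normal_form w -> ~~ headA w.2 -> a \in A -> a \notin CA ->
  (actA a w).2 = inl (rA (a * w.1)) :: w.2.
Proof.
case: w => c l /andP[Cc _] nl Aa Ca; rewrite /= in Cc nl.
rewrite /actA; have -> : splitA (c, l) = (c, l) by case: l nl => [|[]].
rewrite /joinA /=; case: eqP => // /crep_eq1 Cac.
by move: Ca; rewrite -(groupMr a Cc) Cac.
Qed.

Lemma actB_headA b w : normal_form w -> ~~ headB w.2 -> b \in B -> b \notin CB ->
  (actB b w).2 = inr (rB (b * phi w.1)) :: w.2.
Proof.
case: w => c l /andP[Cc _] nl Bb Cb; rewrite /= in Cc nl.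
rewrite /actB; have -> : splitB (c, l) = (phi c, l) by case: l nl => [|[]].
rewrite /joinB /=; case: eqP => // /crep_eq1 Cbc.
by move: Cb; rewrite -(groupMr b (phi_in Cc)) Cbc.
Qed.

Definition nform := {w : gT * seq letter | normal_form w}.

Lemma normal_form1 : normal_form (1, [::]). Proof. by rewrite /normal_form /= group1. Qed.
Definition nform1 : nform := exist _ (1, [::]) normal_form1.

Definition tactA a w := if a \in A then actA a w else w.
Definition tactB b w := if b \in B then actB b w else w.

Lemma tactA_normal a w : normal_form w -> normal_form (tactA a w).
Proof. by rewrite /tactA; case: ifP => // Aa; exact: actA_normal. Qed.
Lemma tactB_normal b w : normal_form w -> normal_form (tactB b w).
Proof. by rewrite /tactB; case: ifP => // Bb; exact: actB_normal. Qed.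

Definition nf_actA a (w : nform) : nform := exist normal_form _ (tactA_normal a (valP w)).
Definition nf_actB b (w : nform) : nform := exist normal_form _ (tactB_normal b (valP w)).

Lemma nf_actAK a : cancel (nf_actA a) (nf_actA a^-1).
Proof.
move=> w; apply: val_inj; rewrite /= /tactA groupV.
by case: ifP => Aa; rewrite ?Aa // -actAM ?valP // mulVg actA1 ?valP.
Qed.
Lemma nf_actBK b : cancel (nf_actB b) (nf_actB b^-1).
Proof.
move=> w; apply: val_inj; rewrite /= /tactB groupV.
by case: ifP => Bb; rewrite ?Bb // -actBM ?valP ?groupV // mulVg actB1 ?valP.
Qed.

Lemma nf_actVK (T : finGroupType) (f : T -> nform -> nform) :
  (forall a, cancel (f a) (f a^-1)) -> forall a, cancel (f a^-1) (f a).
Proof. by move=> fK a; have := fK a^-1; rewrite invgK. Qed.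

Definition bijA a : bij nform := Bij (nf_actAK a) (nf_actVK nf_actAK a).
Definition bijB b : bij nform := Bij (nf_actBK b) (nf_actVK nf_actBK b).

Lemma bijA_hom : fin_hom A (@bij_mul _) bijA.
Proof.
move=> a a' Aa Aa'; apply: bij_eq => w; apply: val_inj.
by rewrite /= /tactA groupM // Aa Aa' actAM ?valP.
Qed.
Lemma bijB_hom : fin_hom B (@bij_mul _) bijB.
Proof.
move=> b b' Bb Bb'; apply: bij_eq => w; apply: val_inj.
by rewrite /= /tactB groupM // Bb Bb' actBM ?valP.
Qed.
Lemma bijA_bijB : {in CA, forall c, bijA c = bijB (phi c)}.
Proof.
move=> c Cc; apply: bij_eq => w; apply: val_inj.
by rewrite /= /tactA /tactB (subsetP sCA _ Cc) (subsetP sCB _ (phi_in Cc)) actA_actB ?valP.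
Qed.

Section AmalgamatedProduct.
Variables (X : eqType) (mul : X -> X -> X) (one : X) (inv : X -> X)
  (iA : gT -> X) (iB : hT -> X).
Hypothesis amal : is_amalgamated_product A CA B phi mul one inv iA iB.

Let CA_A c : c \in CA -> c \in A := subsetP sCA c.
Let CB_B d : d \in CB -> d \in B := subsetP sCB d.

Lemma amal_group : is_group mul one inv. Proof. by case: amal. Qed.
Lemma iA_hom : fin_hom A mul iA. Proof. by case: amal. Qed.
Lemma iB_hom : fin_hom B mul iB. Proof. by case: amal. Qed.
Lemma iA_iB c : c \in CA -> iA c = iB (phi c).
Proof. by case: amal => _ _ _ + _; apply. Qed.
Lemma iB_iA d : d \in CB -> iB d = iA (phiV d).
Proof. by move=> Cd; rewrite iA_iB ?phiV_in // phiKV. Qed.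

Let gX := amal_group.

Definition lval (x : letter) : X := match x with inl a => iA a | inr b => iB b end.
Definition word (l : seq letter) : X := foldr (fun x w => mul (lval x) w) one l.
Arguments word : simpl never.

Definition syllable (x : letter) : bool :=
  match x with
  | inl a => (a \in A) && (a \notin CA)
  | inr b => (b \in B) && (b \notin CB)
  end.
Definition reduced := alternating syllable.
Definition inv_letter (x : letter) : letter :=
  match x with inl a => inl a^-1 | inr b => inr b^-1 end.

Lemma word_cons x l : word (x :: l) = mul (lval x) (word l). Proof. by []. Qed.
Lemma word_cat l1 l2 : word (l1 ++ l2) = mul (word l1) (word l2).
Proof.
elim: l1 => [|x l1 IH]; first exact/esym/(amul1g gX).
by rewrite cat_cons !word_cons IH (amulA gX).
Qed.
Lemma word1 x : word [:: x] = lval x.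
Proof. exact: (amulg1 gX). Qed.
Lemma syllable_inv x : syllable (inv_letter x) = syllable x.
Proof. by case: x => [a|b] /=; rewrite !groupV. Qed.
Lemma side_inv x : side (inv_letter x) = side x. Proof. by case: x. Qed.
Lemma lval_inv x : syllable x -> lval (inv_letter x) = inv (lval x).
Proof. by case: x => [a|b] /= /andP[Gx _]; [exact: (fin_homV gX iA_hom) | exact: (fin_homV gX iB_hom)]. Qed.

Lemma reduced_cons x l : reduced (x :: l) =
  [&& syllable x, reduced l & (if l is y :: _ then side x != side y else true)].
Proof. exact: alternating_cons. Qed.
Lemma reducedE x l : reduced (x :: l) = all syllable (x :: l) && path alt_side x l.
Proof. by []. Qed.

Definition gval (x : letter) : X :=
  match x with
  | inl a => if a \in A then iA a else one
  | inr b => if b \in B then iB b else one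
  end.
Definition gword (l : seq letter) : X := foldr (fun x w => mul (gval x) w) one l.
Definition generated (x : X) := exists l, x = gword l.

Lemma gword_cat l1 l2 : gword (l1 ++ l2) = mul (gword l1) (gword l2).
Proof. by elim: l1 => [|x l1 IH] /=; rewrite ?(amul1g gX) // IH (amulA gX). Qed.
Lemma gval_inv x : gval (inv_letter x) = inv (gval x).
Proof.
case: x => [a|b] /=; rewrite groupV; case: ifP => Gx;
  by rewrite ?(fin_homV gX iA_hom) ?(fin_homV gX iB_hom) ?(ainv1 gX).
Qed.
Lemma gword_inv l : gword (rev (map inv_letter l)) = inv (gword l).
Proof.
elim: l => [|x l IH] /=; first by rewrite (ainv1 gX).
by rewrite rev_cons -cats1 gword_cat IH /= (amulg1 gX) gval_inv (ainvM gX).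
Qed.

Lemma generated_mul x y : generated x -> generated y -> generated (mul x y).
Proof. by move=> [l1 ->] [l2 ->]; exists (l1 ++ l2); rewrite gword_cat. Qed.
Lemma generated_inv x : generated x -> generated (inv x).
Proof. by move=> [l ->]; exists (rev (map inv_letter l)); rewrite gword_inv. Qed.
Lemma generated_one : generated one. Proof. by exists [::]. Qed.
Lemma generated_gval x : generated (gval x).
Proof. by exists [:: x]; rewrite /= (amulg1 gX). Qed.

Definition gen_sub := {x : X | generated x}.
Lemma gen_sub_eq (x y : gen_sub) : proj1_sig x = proj1_sig y -> x = y.
Proof. by case: x y => x gx [y gy] /= exy; subst y; rewrite (proof_irrelevance _ gx gy). Qed.

Definition gen_mul (x y : gen_sub) : gen_sub :=
  exist _ _ (generated_mul (proj2_sig x) (proj2_sig y)).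
Definition gen_one : gen_sub := exist _ _ generated_one.
Definition gen_inv (x : gen_sub) : gen_sub := exist _ _ (generated_inv (proj2_sig x)).

Lemma gen_sub_group : is_group gen_mul gen_one gen_inv.
Proof.
by split=> *; apply: gen_sub_eq => /=;
  rewrite ?(amulA gX) ?(amul1g gX) ?(amulg1 gX) ?(amulVg gX) ?(amulgV gX).
Qed.

(* The corestriction of iA, iB to the subgroup they generate extends to a
   retraction of X onto that subgroup; uniqueness forces it to be the
   identity. *)
Lemma amal_generated x : generated x.
Proof.
case: amal => _ hA hB hAB univ.
pose sA a : gen_sub := exist _ _ (generated_gval (inl a)).
pose sB b : gen_sub := exist _ _ (generated_gval (inr b)).
have sA_hom : fin_hom A gen_mul sA.
  by move=> a a' Aa Aa'; apply: gen_sub_eq => /=; rewrite groupM // Aa Aa' hA.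
have sB_hom : fin_hom B gen_mul sB.
  by move=> b b' Bb Bb'; apply: gen_sub_eq => /=; rewrite groupM // Bb Bb' hB.
have sAB : {in CA, forall c, sA c = sB (phi c)}.
  by move=> c Cc; apply: gen_sub_eq => /=; rewrite CA_A // CB_B ?phi_in ?hAB.
have [[r [rM r_iA r_iB]] _] := univ _ _ _ _ gen_sub_group sA sB sA_hom sB_hom sAB.
have [_ uniq] := univ X mul one inv gX iA iB hA hB hAB.
have rK y : proj1_sig (r y) = y.
  apply: (uniq (fun y => proj1_sig (r y)) id) => // [u v | a Aa | b Bb] /=.
  - by rewrite rM.
  - by rewrite r_iA //= Aa.
  - by rewrite r_iB //= Bb.
by rewrite -(rK x); exact: proj2_sig.
Qed.

Definition reduced_repr (x : X) :=
  (exists2 c, c \in CA & x = iA c) \/ (exists s l, reduced (s :: l) /\ x = word (s :: l)).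

Lemma reduced_repr_cons s l : reduced (s :: l) -> reduced_repr (word (s :: l)).
Proof. by move=> rl; right; exists s, l. Qed.

Lemma reduced_repr1 : reduced_repr one.
Proof. by left; exists 1; rewrite ?(fin_hom1 gX iA_hom). Qed.

Lemma reduced_absorb c s l : c \in CA -> reduced (s :: l) ->
  exists s', reduced (s' :: l) /\ mul (iA c) (word (s :: l)) = word (s' :: l).
Proof.
move=> Cc; rewrite reduced_cons => /and3P[+ rl hl]; rewrite !word_cons (amulA gX).
case: s hl => [a | b] hl /andP[Gs nCs].
  have Ac := CA_A Cc; exists (inl (c * a)).
  by rewrite reduced_cons /= rl hl groupM // groupMl // nCs word_cons -iA_hom.
have Bc := CB_B (phi_in Cc); exists (inr (phi c * b)).
by rewrite reduced_cons /= rl hl groupM // groupMl ?phi_in // nCs word_cons iA_iB // -iB_hom.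
Qed.

Lemma reduced_reprMA a x : a \in A -> reduced_repr x -> reduced_repr (mul (iA a) x).
Proof.
move=> Aa [[c Cc ->] | [s [l [rl ->]]]].
  have Ac := CA_A Cc; rewrite -iA_hom //.
  have [Cac | nCac] := boolP (a * c \in CA); first by left; exists (a * c).
  have -> : iA (a * c) = word [:: inl (a * c)] by rewrite word1.
  by apply: reduced_repr_cons; rewrite reduced_cons /= groupM // nCac.
have [Ca | nCa] := boolP (a \in CA).
  by have [s' [rs' ->]] := reduced_absorb Ca rl; exact: reduced_repr_cons.
case: s rl => [a1 | b1] rl; last first.
  by apply: (@reduced_repr_cons (inl a) (inr b1 :: l)); rewrite reduced_cons /= Aa nCa rl.
move: rl; rewrite reduced_cons word_cons (amulA gX) /= => /and3P[/andP[Aa1 _] rl hl].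
rewrite -iA_hom //; have [Caa1 | nCaa1] := boolP (a * a1 \in CA); last first.
  by apply: (@reduced_repr_cons (inl (a * a1))); rewrite reduced_cons /= groupM // nCaa1 rl hl.
case: l rl {hl} => [|s l] rl; first by left; exists (a * a1); rewrite // (amulg1 gX).
by have [s' [rs' ->]] := reduced_absorb Caa1 rl; exact: reduced_repr_cons.
Qed.

Lemma reduced_reprMB b x : b \in B -> reduced_repr x -> reduced_repr (mul (iB b) x).
Proof.
move=> Bb [[c Cc ->] | [s [l [rl ->]]]].
  have Bc := CB_B (phi_in Cc); rewrite iA_iB // -iB_hom //.
  have [Cbc | nCbc] := boolP (b * phi c \in CB).
    by left; exists (phiV (b * phi c)); rewrite ?phiV_in // -iB_iA.
  have -> : iB (b * phi c) = word [:: inr (b * phi c)] by rewrite word1.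
  by apply: reduced_repr_cons; rewrite reduced_cons /= groupM // nCbc.
have [Cb | nCb] := boolP (b \in CB).
  have [s' [rs' e]] := reduced_absorb (phiV_in Cb) rl.
  by rewrite iB_iA // e; exact: reduced_repr_cons.
case: s rl => [a1 | b1] rl.
  by apply: (@reduced_repr_cons (inr b) (inl a1 :: l)); rewrite reduced_cons /= Bb nCb rl.
move: rl; rewrite reduced_cons word_cons (amulA gX) /= => /and3P[/andP[Bb1 _] rl hl].
rewrite -iB_hom //; have [Cbb1 | nCbb1] := boolP (b * b1 \in CB); last first.
  by apply: (@reduced_repr_cons (inr (b * b1))); rewrite reduced_cons /= groupM // nCbb1 rl hl.
rewrite iB_iA //; case: l rl {hl} => [|s l] rl.
  by left; exists (phiV (b * b1)); rewrite ?phiV_in // (amulg1 gX).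
by have [s' [rs' ->]] := reduced_absorb (phiV_in Cbb1) rl; exact: reduced_repr_cons.
Qed.

Lemma reduced_repr_all x : reduced_repr x.
Proof.
have [l ->] := amal_generated x; elim: l => [|[a|b] l IH] /=; first exact: reduced_repr1.
  by case: ifP => Aa; [exact: reduced_reprMA | rewrite (amul1g gX)].
by case: ifP => Bb; [exact: reduced_reprMB | rewrite (amul1g gX)].
Qed.

Definition head_side (l : seq letter) := if l is x :: _ then Some (side x) else None.
Lemma headA_side l : headA l = (head_side l == Some true). Proof. by case: l => [|[]]. Qed.
Lemma headB_side l : headB l = (head_side l == Some false). Proof. by case: l => [|[]]. Qed.

(* X acts on normal forms; the normal form of a reduced word of length k has
   k letters, so this length does not depend on the word. *)
Lemma reduced_length_invariant :
  exists len : X -> nat, forall l, reduced l -> len (word l) = size l.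
Proof.
case: amal => _ _ _ _ univ.
have [[h [hM hA hB]] _] := univ _ _ _ _ (bij_is_group _) bijA bijB bijA_hom bijB_hom bijA_bijB.
pose nf x := val (bij_fun (h x) nform1).
suff nf_word l : reduced l ->
    size (nf (word l)).2 = size l /\ head_side (nf (word l)).2 = head_side l.
  by exists (fun x => size (nf x).2) => l /nf_word[].
elim: l => [|s l IH]; first by rewrite /nf /word /= (abs_hom1 gX (bij_is_group _) hM).
rewrite reduced_cons => /and3P[ss rl hl]; have [IHsize IHhead] := IH rl.
rewrite /nf word_cons hM /=; set w := bij_fun (h (word l)) nform1.
have nw : normal_form (val w) := valP w.
case: s ss hl => [a | b] /andP[Gs nCs] hl.
  rewrite hA //= /tactA Gs actA_headB //= ?IHsize //.
  by rewrite headA_side IHhead; case: l hl {IH IHsize IHhead rl w nw} => [|[]].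
rewrite hB //= /tactB Gs actB_headA //= ?IHsize //.
by rewrite headB_side IHhead; case: l hl {IH IHsize IHhead rl w nw} => [|[]].
Qed.

Definition aconj g x := mul (inv g) (mul x g).

Lemma aconj1 x : aconj one x = x.
Proof. by rewrite /aconj (ainv1 gX) (amul1g gX) (amulg1 gX). Qed.

Lemma aconjM g1 g2 x : aconj (mul g1 g2) x = aconj g2 (aconj g1 x).
Proof. by rewrite /aconj (ainvM gX) -!(amulA gX). Qed.

Hypothesis A_wide : forall t, exists2 u, u \in A & (u \notin CA) && (t * u^-1 \notin CA).
Hypothesis B_wide : forall t, exists2 u, u \in B & (u \notin CB) && (t * u^-1 \notin CB).
Hypothesis C_moved : forall c, c \in CA -> c != 1 ->
  (exists2 a, a \in A & c ^ a \notin CA) \/ (exists2 b, b \in B & phi c ^ b \notin CB).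

Lemma syllable_of_side (b : bool) : exists u, syllable u && (side u == b).
Proof.
case: b.
  by have [u Au /andP[Cu _]] := A_wide 1; exists (inl u); rewrite /= Au Cu.
by have [u Bu /andP[Cu _]] := B_wide 1; exists (inr u); rewrite /= Bu Cu.
Qed.

Lemma syllable_split t : syllable t -> exists u t',
  [/\ syllable u, syllable t', side u = side t, side t' = side t
    & mul (lval t) (inv (lval u)) = lval t'].
Proof.
case: t => [a | b] /andP[Gt _].
  have [u Au /andP[Cu Ct]] := A_wide a; exists (inl u), (inl (a * u^-1)).
  by rewrite /= Au Cu groupM ?groupV // Ct -(fin_homV gX iA_hom) // -iA_hom ?groupV.
have [u Bu /andP[Cu Ct]] := B_wide b; exists (inr u), (inr (b * u^-1)).
by rewrite /= Bu Cu groupM ?groupV // Ct -(fin_homV gX iB_hom) // -iB_hom ?groupV.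
Qed.

Lemma conj_C_syllable c : c \in CA -> c != 1 -> exists g s, syllable s /\ aconj g (iA c) = lval s.
Proof.
move=> Cc c1; have Ac := CA_A Cc.
case: (C_moved Cc c1) => [[a Aa Cca] | [b Bb Cpb]].
  exists (iA a), (inl (c ^ a)); rewrite /= groupJ // Cca; split=> //.
  by rewrite /aconj -(fin_homV gX iA_hom) // -!iA_hom ?groupV ?groupM // mulgA.
have Bc := CB_B (phi_in Cc).
exists (iB b), (inr (phi c ^ b)); rewrite /= groupJ // Cpb; split=> //.
by rewrite iA_iB // /aconj -(fin_homV gX iB_hom) // -!iB_hom ?groupV ?groupM // mulgA.
Qed.

Definition cyc_reduced s l := reduced (s :: l) && (side s == side (last s l)).

Lemma conj_cyc_reduced x : x != one ->
  exists g s l, cyc_reduced s l /\ aconj g x = word (s :: l).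
Proof.
move=> x1; case: (reduced_repr_all x) => [[c Cc ex] | [s [l [rl ex]]]].
  have c1 : c != 1 by apply: contraNneq x1 => c1; rewrite ex c1 (fin_hom1 gX iA_hom).
  have [g [s [ss e]]] := conj_C_syllable Cc c1.
  by exists g, s, [::]; rewrite /cyc_reduced reduced_cons ss eqxx word1 ex.
have [hd | hd] := boolP (side s == side (last s l)).
  by exists one, s, l; rewrite aconj1 /cyc_reduced rl hd.
case/lastP: l rl hd ex => [|m t] rl hd ex; first by rewrite eqxx in hd.
move: rl; rewrite reducedE /= all_rcons rcons_path => /andP[/and3P[ss st am] /andP[pm st']].
rewrite last_rcons in hd.
(* Write the last syllable as t' u and move u to the front. *)
have [u [t' [su st'' sut stt e]]] := syllable_split st.
exists (lval (inv_letter u)), u, (s :: rcons m t'); split.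
  rewrite /cyc_reduced reducedE /= all_rcons su ss am st'' /= rcons_path pm.
  by rewrite /alt_side last_rcons stt sut eq_sym hd eqxx andbT; exact: st'.
rewrite ex /aconj lval_inv // (ainvK gX) -cats1 -cat_cons !word_cat !word1.
by rewrite -(amulA gX) e -(word1 t') -word_cat cat_cons cats1.
Qed.

Lemma conj_cyc_reduced_long s l k : cyc_reduced s l ->
  exists g s' l', [/\ cyc_reduced s' l', k <= size (s' :: l')
                   & aconj g (word (s :: l)) = word (s' :: l')].
Proof.
move=> csl; elim: k => [|k [g [s' [l' [/andP[rl' hd'] hk e]]]]].
  by exists one, s, l; rewrite aconj1.
have [u /andP[su /eqP sus]] := syllable_of_side (~~ side s').
exists (mul g (lval u)), (inv_letter u), (s' :: rcons l' u); split.
- move: rl'; rewrite /cyc_reduced !reducedE /= all_rcons syllable_inv su.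
  case/andP=> /andP[-> ->] pl' /=; rewrite rcons_path pl' /alt_side last_rcons.
  by rewrite !side_inv sus -(eqP hd'); case: (side s').
- by rewrite /= size_rcons ltnS (leq_trans hk) // leqnSn.
- by rewrite aconjM e /aconj -lval_inv // -(word1 u) -word_cat cats1.
Qed.

Lemma amalgam_infinite_conj_class x : x <> one -> infinite_conj_class mul inv x.
Proof.
move=> /eqP x1 [s0 conj_s0].
have [len lenE] := reduced_length_invariant.
have [g0 [s [l [csl e0]]]] := conj_cyc_reduced x1.
have [g [s' [l' [/andP[rl' _] long e]]]] :=
  conj_cyc_reduced_long (\max_(y <- s0) len y).+1 csl.
have := @leq_bigmax_seq X s0 xpredT len _ (conj_s0 (mul g0 g)) isT.
rewrite -/(aconj _ x) aconjM e0 e lenE // => bound.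
by have := leq_trans long bound; rewrite ltnn.
Qed.

End AmalgamatedProduct.
End NormalForms.

Lemma avoid_two_cosets (gT : finGroupType) (G C : {group gT}) t :
  (#|C|.*2 < #|G|)%N -> exists2 u, u \in G & (u \notin C) && (t * u^-1 \notin C)%g.
Proof.
move=> lt2CG; have : ~~ (G \subset C :|: (C :* t)%g).
  apply: contraL lt2CG => /subset_leq_card leGC; rewrite -leqNgt -addnn.
  by rewrite (leq_trans leGC) // (leq_trans (leq_card_setU _ _)) // card_rcoset.
case/subsetPn => u Gu; rewrite in_setU negb_or => /andP[Cu Ctu].
exists u => //; rewrite Cu /=; apply: contra Ctu => Ctu.
by rewrite mem_rcoset -groupV invMg invgK.
Qed.

Lemma conj_stable_or_moved (gT : finGroupType) (G D : {set gT}) x :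
  {in G, forall g, (x ^ g)%g \in D} \/ exists2 g, g \in G & (x ^ g)%g \notin D.
Proof.
have [/forall_inP stab | /forall_inPn[g Gg xgD]] := boolP [forall (g | g \in G), (x ^ g)%g \in D].
  by left.
by right; exists g.
Qed.

Lemma morph_coprime_eq1 (gT hT : finGroupType) (D G : {group gT}) (H : {group hT})
    (f : {morphism D >-> hT}) c :
  ('injm f)%g -> coprime #|G| #|H| -> c \in D -> c \in G -> f c \in H -> c = 1%g.
Proof.
move=> injf coGH Dc Gc Hfc; apply/eqP; rewrite -order_eq1 -dvdn1 -(eqP coGH).
by rewrite dvdn_gcd order_dvdG //= -(order_injm injf Dc) order_dvdG.
Qed.

Section ExtraspecialByCyclic.
Variables (q m : nat) (gT : finGroupType) (Q A : {group gT}) (alpha : gT).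
Hypotheses (pr_q : prime q) (exQ : extraspecial Q) (ordQ : #|Q| = q ^ m.*2.+1)
  (defA : (Q ><| <[alpha]>)%g = A) (alpha_ZQ : alpha \in 'C('Z(Q))%g).
Local Open Scope group_scope.

Let C := 'Z(Q) <*> <[alpha]>.

Lemma center_join_cycleE : C = 'Z(Q) * <[alpha]>.
Proof. by apply: cent_joinEr; rewrite cycle_subG. Qed.

Lemma center_join_cycle_sub : C \subset A.
Proof.
have [nsQA sHA _ _ _] := sdprod_context defA.
by rewrite join_subG sHA andbT (subset_trans (center_sub Q)) ?normal_sub.
Qed.

Lemma center_join_cycle_small : 0 < m -> (#|C|.*2 < #|A|)%N.
Proof.
move=> m_gt0; have qQ : q.-group Q by rewrite /pgroup ordQ pnatX pnat_id.
have leC : (#|C| <= q * #[alpha])%N.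
  rewrite -(card_center_extraspecial qQ exQ) center_join_cycleE.
  by rewrite /order mul_cardG leq_pmulr ?cardG_gt0.
rewrite -(sdprod_card defA) ordQ -/#[alpha].
apply: (@leq_ltn_trans (q * #[alpha]).*2); first by rewrite leq_double.
rewrite -mul2n mulnA ltn_mul2r order_gt0 expnSr ltn_mul2r prime_gt0 //=.
have q_sq : 2 < q ^ 2 by rewrite (@leq_trans (2 ^ 2)) ?leq_exp2r ?prime_gt1.
by rewrite (leq_trans q_sq) // leq_pexp2l ?prime_gt0 // -addnn (leq_add m_gt0 m_gt0).
Qed.

Hypothesis alpha_faithful : faithful_on_frattini_quot Q alpha.

Lemma center_join_cycle_meet : C :&: Q = 'Z(Q).
Proof.
have [_ _ _ _ tiQH] := sdprod_context defA.
by rewrite center_join_cycleE -group_modl ?center_sub // setIC tiQH mulg1.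
Qed.

Lemma commg_center_join_cycle y g :
  y \in C -> g \in Q -> y ^ g \in C -> [~ g, y] \in 'Z(Q).
Proof.
move=> Cy Qg Cyg; rewrite -center_join_cycle_meet inE; apply/andP; split.
  by rewrite commgEr conjVg groupM ?groupV.
have [nsQA _ _ _ _] := sdprod_context defA.
have Ny : y \in 'N(Q) := subsetP (normal_norm nsQA) y (subsetP center_join_cycle_sub y Cy).
by rewrite commgEl groupM ?groupV // memJ_norm.
Qed.

(* A conjugation-stable element z a of C (z central, a in <[alpha]>) makes
   a centralise Q modulo Z(Q), so a = 1 by faithfulness. *)
Lemma conj_stable_center c : c \in C -> {in A, forall a, c ^ a \in C} -> c \in 'Z(Q).
Proof.
have [nsQA _ _ _ _] := sdprod_context defA.
move=> Cc stab; move: (Cc); rewrite center_join_cycleE => /mulsgP[z a0 Zz Aa0 ec].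
have sAC : <[alpha]> \subset 'C('Z(Q)) by rewrite cycle_subG.
have ca : commute z a0 by apply/commute_sym/(centP (subsetP sAC _ Aa0)).
have /setIP[_ Cz] := Zz.
suff a01 : a0 = 1 by rewrite ec a01 mulg1.
apply: alpha_faithful => //; rewrite gen_subG.
apply/subsetP => _ /imset2P[g y Qg /cycleP[k ->] ->].
have -> : [~ g, a0 ^+ k] = [~ g, c ^+ k].
  rewrite ec (expgMn _ ca) commgMJ.
  by have /commgP/eqP -> := commute_sym (centP (groupX k Cz) g Qg); rewrite conj1g mulg1.
rewrite commg_center_join_cycle ?groupX //.
by rewrite conjXg groupX // stab // (subsetP (normal_sub nsQA)).
Qed.

End ExtraspecialByCyclic.
Theorem mainTheorem11
  (p q m n : nat)
  (pr_p : prime p) (pr_q : prime q) (odd_p : odd p) (odd_q : odd q) (neq_pq : p != q)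
  (hm : least_Sp_index p q m) (hn : least_Sp_index q p n)
  (gT hT : finGroupType)
  (Q A : {group gT}) (alpha : gT)
  (exQ : extraspecial Q) (ordQ : #|Q| = q ^ (m.*2.+1)) (expQ : exponent Q = q)
  (ord_alpha : #[alpha]%g = p) (defA : (Q ><| <[alpha]>)%g = A)
  (alpha_ZQ : alpha \in 'C('Z(Q))%g) (alpha_faithful : faithful_on_frattini_quot Q alpha)
  (P B : {group hT}) (beta : hT)
  (exP : extraspecial P) (ordP : #|P| = p ^ (n.*2.+1)) (expP : exponent P = p)
  (ord_beta : #[beta]%g = q) (defB : (P ><| <[beta]>)%g = B)
  (beta_ZP : beta \in 'C('Z(P))%g) (beta_faithful : faithful_on_frattini_quot P beta)
  (phi : {morphism ('Z(Q) <*> <[alpha]>)%G >-> hT})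
  (iso_phi : isom ('Z(Q) <*> <[alpha]>)%g ('Z(P) <*> <[beta]>)%g phi)
  (X : eqType) (mul : X -> X -> X) (one : X) (inv : X -> X)
  (iA : gT -> X) (iB : hT -> X)
  (amal : is_amalgamated_product A ('Z(Q) <*> <[alpha]>)%g B phi mul one inv iA iB) :
  (forall x : X, x <> one -> infinite_conj_class mul inv x) /\
  (forall (F : fieldType) (z : seq (F * X)),
      ga_central mul z <-> exists c : F, ga_coef z =1 ga_coef [:: (c, one)]).
Proof.
have [m_gt0 _ _] := hm; have [n_gt0 _ _] := hn.
have sCA := center_join_cycle_sub defA; have sCB := center_join_cycle_sub defB.
have coQP : coprime #|Q| #|P|.
  by rewrite ordQ ordP coprimeXl // coprimeXr // prime_coprime // dvdn_prime2 // eq_sym.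
have C_moved c : c \in ('Z(Q) <*> <[alpha]>)%g -> c != 1%g ->
    (exists2 a, a \in A & (c ^ a)%g \notin ('Z(Q) <*> <[alpha]>)%g) \/
    (exists2 b, b \in B & (phi c ^ b)%g \notin ('Z(P) <*> <[beta]>)%g).
  move=> Cc c1; case: (conj_stable_or_moved A ('Z(Q) <*> <[alpha]>)%g c) => [stA|]; last by left.
  case: (conj_stable_or_moved B ('Z(P) <*> <[beta]>)%g (phi c)) => [stB|]; last by right.
  case/eqP: c1; apply: (morph_coprime_eq1 (phi_inj iso_phi) coQP Cc).
    exact/(subsetP (center_sub Q))/(conj_stable_center defA alpha_ZQ alpha_faithful Cc stA).
  have Cphic := phi_in iso_phi Cc.
  exact/(subsetP (center_sub P))/(conj_stable_center defB beta_ZP beta_faithful Cphic stB).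
have icc := amalgam_infinite_conj_class iso_phi sCA sCB amal
  (fun t => avoid_two_cosets t (center_join_cycle_small pr_q exQ ordQ defA alpha_ZQ m_gt0))
  (fun t => avoid_two_cosets t (center_join_cycle_small pr_p exP ordP defB beta_ZP n_gt0))
  C_moved.
by split=> // F z; exact: (ga_central_scalar (amal_group amal) z icc).
Qed.
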